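(* Let $q$ be a prime power and let $4\le h\le k$ be integers. Let $s\ge 0$ and $r\ge 1$ be integers, let $i_1,\ldots,i_s$ be distinct indices in $\{1,\ldots,h\}$ and $j_1,\ldots,j_r$ distinct indices in $\{h+1,\ldots,k\}$, and let $a_{i_1},\ldots,a_{i_s},b_{j_1},\ldots,b_{j_r}\in\mathbb{F}_q^*$. Let $\Lambda$ be the number of $(x_1,\ldots,x_k)\in\mathbb{F}_q^k$ satisfying $$a_{i_1}x_{i_1}+\cdots+a_{i_s}x_{i_s}+b_{j_1}x_{j_1}+\cdots+b_{j_r}x_{j_r}=0\quad\text{and}\quad (x_1+\cdots+x_h)\,x_1x_2\cdots x_h=0.$$ Then $$\Lambda=q^{k-1}-q^{k-h-1}(q-1)^h+\psi_{h}q^{k-h-1}=q^{k-h-1}\bigl(q^h+\psi_{h}-(q-1)^h\bigr).$$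
   Context: For an integer $m\ge 0$, $\psi_m$ denotes the number of $(x_1,\ldots,x_m)\in\mathbb{F}_q^m$ with $\sum_{i=1}^m x_i=0$ and $x_i\neq 0$ for all $i$ (so $\psi_0=1$). *)

From HB Require Import structures.
From mathcomp Require Import all_boot all_order all_algebra all_field.
Set Implicit Arguments. Unset Strict Implicit. Unset Printing Implicit Defensive.
Import GRing.Theory.
Local Open Scope ring_scope.

Definition psi (F : finFieldType) (m : nat) : nat :=
  #|[set x : {ffun 'I_m -> F} | (\sum_(i < m) x i == 0) && [forall i, x i != 0]]|.

From mathcomp Require Import all_boot all_order all_algebra all_field.
From mathcomp Require Import zify ring.
Set Implicit Arguments. Unset Strict Implicit. Unset Printing Implicit Defensive.
Import GRing.Theory.
Local Open Scope ring_scope.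

(* Write k = h + m.  Some x_j with j >= h, j in J, occurs in the linear form
   with a nonzero coefficient but not in the condition on x_1, ..., x_h, so
   translating x_j along F permutes the values of the linear form without
   changing that condition: exactly a 1/q fraction of the solutions of the
   condition lie on the hyperplane.  The condition only involves the first h
   coordinates, so it has S q^m solutions, where S counts its solutions in
   F^h; and the complement of those S vectors consists of the (q-1)^h vectors
   with nonzero coordinates minus the psi_h of them summing to zero. *)

Section Restriction.

Variables (T : finType) (h m : nat).

Lemma big_ord_lshift (R : Type) (idx : R) (op : Monoid.law idx)
    (G : 'I_(h + m) -> R) :
  \big[op/idx]_(i : 'I_(h + m) | (i < h)%N) G i
  = \big[op/idx]_(i < h) G (lshift m i).
Proof.
rewrite big_split_ord /= [X in op _ X]big_pred0 => [|j]; last first.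
  by rewrite ltnNge leq_addr.
by rewrite Monoid.mulm1; apply: eq_bigl => i; exact: ltn_ord.
Qed.

Lemma card_lshift_preim (P : pred {ffun 'I_h -> T}) :
  #|[set x : {ffun 'I_(h + m) -> T} | P [ffun i => x (lshift m i)]]|
  = (#|[set z | P z]| * #|T| ^ m)%N.
Proof.
pose glue (p : {ffun 'I_h -> T} * {ffun 'I_m -> T}) : {ffun 'I_(h + m) -> T} :=
  [ffun i => match split i with inl a => p.1 a | inr b => p.2 b end].
have glue_lshift p a : glue p (lshift m a) = p.1 a.
  by rewrite ffunE (unsplitK (inl a)).
have glue_rshift p b : glue p (rshift h b) = p.2 b.
  by rewrite ffunE (unsplitK (inr b)).
have glue_inj : injective glue.
  move=> [z1 w1] [z2 w2] E; congr pair; apply/ffunP => a.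
    by have := glue_lshift (z1, w1) a; rewrite E glue_lshift.
  by have := glue_rshift (z1, w1) a; rewrite E glue_rshift.
have -> : [set x : {ffun 'I_(h + m) -> T} | P [ffun i => x (lshift m i)]]
          = glue @: setX [set z | P z] setT.
  apply/setP => x; rewrite inE; apply/idP/imsetP.
    move=> Px; exists ([ffun a => x (lshift m a)], [ffun b => x (rshift h b)]).
      by rewrite !inE andbT.
    apply/ffunP => i; rewrite ffunE; case: splitP => j Hj; rewrite ffunE /=;
      by congr (x _); apply: val_inj; rewrite /= Hj.
  move=> [[z w]]; rewrite !inE andbT => Pz ->.
  suff -> : [ffun i => glue (z, w) (lshift m i)] = z by [].
  by apply/ffunP => a; rewrite ffunE glue_lshift.
by rewrite card_imset // cardsX cardsT card_ffun card_ord.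
Qed.

End Restriction.

Section SumProduct.

Variables (F : finFieldType) (h : nat).

Lemma card_ffun_neq0 :
  #|[set z : {ffun 'I_h -> F} | [forall i, z i != 0]]| = ((#|F| - 1) ^ h)%N.
Proof.
transitivity #|ffun_on_mem 'I_h (mem (predC1 (0 : F)))|; last first.
  by rewrite card_ffun_on card_ord cardC1 subn1.
by apply: eq_card => z; rewrite inE; apply/forallP/ffun_onP => nz i;
  have := nz i; rewrite !inE.
Qed.

Lemma card_sum_mul_prod_eq0 :
  (#|[set z : {ffun 'I_h -> F} | ((\sum_(i < h) z i) * (\prod_(i < h) z i) == 0)%R]|
   + (#|F| - 1) ^ h = #|F| ^ h + psi F h)%N.
Proof.
set S := [set z | _]; set N := [set z : {ffun 'I_h -> F} | [forall i, z i != 0]].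
set P := [set z : {ffun 'I_h -> F} | (\sum_(i < h) z i == 0) && [forall i, z i != 0]].
have PN : P \subset N by apply/subsetP => z; rewrite !inE => /andP[].
have compS : ~: S = N :\: P.
  apply/setP => z; have nz : (\prod_(i < h) z i != 0) = [forall i, z i != 0].
    by apply/prodf_neq0/forallP => nz i *; apply: nz.
  rewrite !inE mulf_eq0 negb_or nz.
  by case: (\sum_(i < h) z i == 0); case: [forall i, z i != 0].
have := cardsC S; rewrite compS cardsD (setIidPr PN) card_ffun card_ord.
rewrite -card_ffun_neq0 /psi -/P -/N => <-.
by have := subset_leq_card PN; lia.
Qed.

End SumProduct.

Section Translation.

Variables (F : finFieldType) (X : finType).

Lemma card_fiber0_mul_card (l : X -> F) (Q : pred X) (t : F -> X -> X) (c : F) :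
  c != 0 -> (forall d, injective (t d)) ->
  (forall x d, l (t d x) = l x + c * d) -> (forall x d, Q (t d x) = Q x) ->
  (#|[set x | (l x == 0)%R && Q x]| * #|F|)%N = #|[set x | Q x]|.
Proof.
move=> c_nz t_inj lt Qt.
have fiber e : #|[set x | (l x == e) && Q x]| = #|[set x | (l x == 0) && Q x]|.
  rewrite -(card_preimset _ (t_inj (e / c))); apply: eq_card => x.
  by rewrite !inE lt Qt mulrC divfK // -{2}(add0r e) (inj_eq (addIr e)).
transitivity (\sum_(e : F) #|[set x | (l x == e) && Q x]|)%N.
  under eq_bigr => e _ do rewrite fiber.
  by rewrite sum_nat_const cardT -cardE mulnC.
rewrite -sum1_card (partition_big l xpredT) //; apply: eq_bigr => e _.
by rewrite -sum1_card; apply: eq_bigl => x; rewrite !inE andbC.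
Qed.

End Translation.

Definition shift_coord {F : zmodType} {n} (j : 'I_n) (d : F) (x : {ffun 'I_n -> F}) :
    {ffun 'I_n -> F} :=
  [ffun i => if i == j then x i + d else x i].

Lemma shift_coord_inj {F : zmodType} {n} (j : 'I_n) (d : F) : injective (shift_coord j d).
Proof.
move=> x y /ffunP E; apply/ffunP => i; have := E i; rewrite !ffunE.
by case: eqP => // _; apply: addIr.
Qed.

Lemma shift_coord_id {F : zmodType} {n} (j : 'I_n) (d : F) x i :
  i != j -> shift_coord j d x i = x i.
Proof. by rewrite ffunE => /negbTE ->. Qed.

Section Hyperplane.

Variables (F : finFieldType) (h m : nat) (I J : {set 'I_(h + m)}).
Variables (a b : 'I_(h + m) -> F).
Hypotheses (I_lt : forall i, i \in I -> (i < h)%N)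
           (J_ge : forall j, j \in J -> (h <= j)%N)
           (b_neq0 : forall j, j \in J -> b j != 0).

Let form (x : {ffun 'I_(h + m) -> F}) :=
  \sum_(i in I) a i * x i + \sum_(j in J) b j * x j.
Let cond (x : {ffun 'I_(h + m) -> F}) :=
  (\sum_(i : 'I_(h + m) | (i < h)%N) x i)
  * (\prod_(i : 'I_(h + m) | (i < h)%N) x i) == 0.

Lemma card_cond :
  #|[set x | cond x]|
  = (#|[set z : {ffun 'I_h -> F} | ((\sum_(i < h) z i) * (\prod_(i < h) z i) == 0)%R]|
     * #|F| ^ m)%N.
Proof.
rewrite -card_lshift_preim; apply: eq_card => x; rewrite !inE /cond !big_ord_lshift.
by congr (_ * _ == 0); apply: eq_bigr => i _; rewrite ffunE.
Qed.

Lemma card_hyperplane_cond (j : 'I_(h + m)) : j \in J ->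
  (#|[set x | (form x == 0)%R && cond x]| * #|F|)%N = #|[set x | cond x]|.
Proof.
move=> jJ; have j_ge := J_ge jJ.
apply: (card_fiber0_mul_card (b_neq0 jJ) (@shift_coord_inj _ _ j)) => x d.
  have sumI : \sum_(i in I) a i * shift_coord j d x i = \sum_(i in I) a i * x i.
    apply: eq_bigr => i iI; rewrite shift_coord_id //.
    by apply: contraTneq (I_lt iI) => ->; rewrite -leqNgt.
  have sumJ : \sum_(i in J) b i * shift_coord j d x i
              = \sum_(i in J) b i * x i + b j * d.
    rewrite !(bigD1 j jJ) /= ffunE eqxx mulrDr addrAC; congr (_ + _ + _).
    by apply: eq_bigr => i /andP[_ ij]; rewrite shift_coord_id.
  by rewrite /form sumI sumJ addrA.
have shift_lt (idx : F) (op : F -> F -> F) :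
    \big[op/idx]_(i : 'I_(h + m) | (i < h)%N) shift_coord j d x i
    = \big[op/idx]_(i : 'I_(h + m) | (i < h)%N) x i.
  apply: eq_bigr => i i_lt; rewrite shift_coord_id //.
  by apply: contraTneq i_lt => ->; rewrite -leqNgt.
by rewrite /cond !shift_lt.
Qed.

End Hyperplane.

Theorem proposition2p1 (F : finFieldType) (h k : nat) (I J : {set 'I_k})
    (a b : 'I_k -> F) :
  (4 <= h)%N -> (h <= k)%N ->
  (forall i, i \in I -> (i < h)%N) ->
  (forall j, j \in J -> (h <= j)%N) ->
  (1 <= #|J|)%N ->
  (forall i, i \in I -> a i != 0) ->
  (forall j, j \in J -> b j != 0) ->
  let q := #|F| in
  let Lambda := #|[set x : {ffun 'I_k -> F} |
       (\sum_(i in I) a i * x i + \sum_(j in J) b j * x j == 0) &&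
       ((\sum_(i : 'I_k | (i < h)%N) x i) * (\prod_(i : 'I_k | (i < h)%N) x i) == 0)]| in
  (Lambda%:Z = (q ^ k.-1)%:Z - (q ^ (k - h - 1) * (q - 1) ^ h)%:Z
                 + (psi F h * q ^ (k - h - 1))%:Z)
  /\ (Lambda%:Z = (q ^ (k - h - 1))%:Z * ((q ^ h)%:Z + (psi F h)%:Z - ((q - 1) ^ h)%:Z)).
Proof.
move=> _ hk I_lt J_ge /card_gt0P[j jJ] _ b_neq0.
have := subnKC hk; move: (k - h)%N => m Ek; subst k => q Lambda.
have m_gt0 : (0 < m)%N by have := ltn_ord j; have := J_ge j jJ; lia.
have q_gt0 : (0 < q)%N by apply/card_gt0P; exists 0.
have qm : (q ^ m = q * q ^ m.-1)%N by rewrite -expnS prednK.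
have count := card_hyperplane_cond a I_lt J_ge b_neq0 jJ.
rewrite card_cond -/q -/Lambda qm in count.
set S := #|_| in count.
have {count}-> : Lambda = (S * q ^ m.-1)%N.
  by apply/eqP; rewrite -(eqn_pmul2r q_gt0) count mulnCA mulnC.
have := card_sum_mul_prod_eq0 F h; rewrite -/q.
have -> : ((h + m).-1 = h + m.-1)%N by lia.
have -> : (m - 1 = m.-1)%N by lia.
rewrite expnD -/S; move: S (q ^ m.-1)%N (q ^ h)%N ((q - 1) ^ h)%N (psi F h).
move=> S A C B P E.
have ES : S%:Z = C%:Z + P%:Z - B%:Z by rewrite -PoszD -E PoszD addrK.
by rewrite PoszM ES; split; ring.
Qed.
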